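(* For every fixed $a\in(0,1/2]$, \[ \lim_{n\to\infty}\overline{\Lambda}(n;a)=\theta(a):=\begin{cases}\frac{(1-\sqrt a)^{2}}{a}, & 0<a<\frac14,\\[2pt] \frac{1}{2a}-1, & \frac14\le a\le\frac12.\end{cases} \]
   Context: For integers $n\ge1$, $k\in[0:n]$ and real $x$, the Krawtchouk polynomial is $K_k(x)=K_k^{(n)}(x):=\sum_{j=0}^{k}(-1)^{j}\binom{x}{j}\binom{n-x}{k-j}$, with generalized binomial coefficients $\binom{x}{j}=\frac{x(x-1)\cdots(x-j+1)}{j!}$. Here $[m:n]=\{m,m+1,\dots,n\}$. For real $a\in(0,1/2]$, $\overline{\Lambda}(n;a)$ is the optimal value of the linear program: maximize $-\sum_{k=1}^{n}\left[K_k(0)+K_k(1)\left(\frac1a-1\right)\right]x_k$ over $(x_1,\dots,x_n)\in\mathbb{R}^n$ subject to $x_k\ge0$ for $k\in[1:n]$ and $\sum_{k=1}^{n}[K_k(1)-K_k(i)]x_k\ge -1$ for all $i\in[2:n]$. *)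

From Stdlib Require Import Reals Lra.
Open Scope R_scope.

Fixpoint gbinom (x : R) (j : nat) : R :=
  match j with
  | O => 1
  | S j' => gbinom x j' * (x - INR j') / INR (S j')
  end.

(* sum_{k=lo}^{hi} f k  (empty, i.e. 0, when hi < lo) *)
Fixpoint sumR (lo : nat) (f : nat -> R) (hi : nat) : R :=
  match hi with
  | O => if Nat.leb lo 0 then f 0%nat else 0
  | S h => sumR lo f h + (if Nat.leb lo (S h) then f (S h) else 0)
  end.

Definition kraw (n k : nat) (x : R) : R :=
  sumR 0 (fun j => (-1) ^ j * gbinom x j * gbinom (INR n - x) (k - j)) k.

(* Feasible set of the LP defining Lambda-bar(n; a); vectors indexed by 1..n *)
Definition lp_feasible (n : nat) (xv : nat -> R) : Prop :=
  (forall k, (1 <= k <= n)%nat -> 0 <= xv k) /\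
  (forall i, (2 <= i <= n)%nat ->
     sumR 1 (fun k => (kraw n k 1 - kraw n k (INR i)) * xv k) n >= -1).

Definition lp_obj (n : nat) (a : R) (xv : nat -> R) : R :=
  - sumR 1 (fun k => (kraw n k 0 + kraw n k 1 * (1 / a - 1)) * xv k) n.

(* The set of objective values attained on feasible points; its supremum
   (when finite) is Lambda-bar(n; a). *)
Definition lp_values (n : nat) (a : R) : R -> Prop :=
  fun v => exists xv, lp_feasible n xv /\ v = lp_obj n a xv.

Definition LambdaBar_is (n : nat) (a L : R) : Prop := is_lub (lp_values n a) L.

Definition theta (a : R) : R :=
  if Rlt_dec a (1/4) then (1 - sqrt a) ^ 2 / a else 1 / (2 * a) - 1.

From Stdlib Require Import Reals Lra Lia Arith.
Open Scope R_scope.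

(* Lower bound: the geometric point x_k = t z^k with z = (1+s)/(1-s) is feasible for every
   0 < s < 1, because the generating function sum_k K_k(i) z^k = (1-z)^i (1+z)^(n-i) equals
   (-s)^i (1+z)^n; its value is at least ((1/a - 1) s - 1)/(s + s^2), which is theta(a) at
   s = sqrt a/(1 - sqrt a) when a < 1/4 and tends to theta(a) as s -> 1 otherwise.
   Upper bound: weak duality with a single multiplier p on the constraint i = 2.  Since
   K_k(0), K_k(1), K_k(2) are binom(n,k) times polynomials in n and k, the dual slack is a
   quadratic in n - 2k; it is nonnegative for p = theta(a) when a >= 1/4, and for
   p = theta(a) + eps and n large when a < 1/4. *)

Lemma sumR_eq lo f g hi :
  (forall k, (lo <= k <= hi)%nat -> f k = g k) -> sumR lo f hi = sumR lo g hi.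
Proof.
  induction hi as [|hi IH]; intros Hfg; simpl.
  - destruct (Nat.leb lo 0) eqn:E; [apply Nat.leb_le in E; apply Hfg; lia | reflexivity].
  - rewrite IH by (intros; apply Hfg; lia).
    destruct (Nat.leb lo (S hi)) eqn:E; [apply Nat.leb_le in E; rewrite Hfg by lia|]; reflexivity.
Qed.

Lemma sumR_plus lo f g hi : sumR lo (fun k => f k + g k) hi = sumR lo f hi + sumR lo g hi.
Proof.
  induction hi as [|hi IH]; simpl; [|rewrite IH]; destruct (Nat.leb _ _); lra.
Qed.

Lemma sumR_minus lo f g hi : sumR lo (fun k => f k - g k) hi = sumR lo f hi - sumR lo g hi.
Proof.
  induction hi as [|hi IH]; simpl; [|rewrite IH]; destruct (Nat.leb _ _); lra.
Qed.

Lemma sumR_scal lo c f hi : sumR lo (fun k => c * f k) hi = c * sumR lo f hi.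
Proof.
  induction hi as [|hi IH]; simpl; [|rewrite IH]; destruct (Nat.leb _ _); lra.
Qed.

Lemma sumR_nonneg lo f hi :
  (forall k, (lo <= k <= hi)%nat -> 0 <= f k) -> 0 <= sumR lo f hi.
Proof.
  induction hi as [|hi IH]; intros Hf; simpl.
  - destruct (Nat.leb lo 0) eqn:E; [apply Nat.leb_le in E; apply Hf; lia | lra].
  - assert (0 <= sumR lo f hi) by (apply IH; intros; apply Hf; lia).
    destruct (Nat.leb lo (S hi)) eqn:E; [apply Nat.leb_le in E|lra].
    assert (0 <= f (S hi)) by (apply Hf; lia). lra.
Qed.

Lemma sumR_S f hi : sumR 0 f (S hi) = sumR 0 f hi + f (S hi).
Proof. reflexivity. Qed.

Lemma sumR_shift f hi : sumR 0 f (S hi) = f 0%nat + sumR 0 (fun k => f (S k)) hi.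
Proof.
  induction hi as [|hi IH]; [reflexivity|].
  rewrite sumR_S, IH, sumR_S. lra.
Qed.

Lemma sumR_split_first f hi : sumR 0 f hi = f 0%nat + sumR 1 f hi.
Proof.
  induction hi as [|hi IH]; simpl; [lra|].
  rewrite IH. lra.
Qed.

Lemma sumR_trunc lo f m hi : (m <= hi)%nat ->
  (forall k, (m < k <= hi)%nat -> f k = 0) -> sumR lo f hi = sumR lo f m.
Proof.
  induction hi as [|hi IH]; intros Hm Hf.
  - now replace m with 0%nat by lia.
  - destruct (Nat.eq_dec m (S hi)) as [->|Hne]; [reflexivity|].
    simpl. rewrite IH, Hf by (try intros; try apply Hf; lia).
    destruct (Nat.leb lo (S hi)); lra.
Qed.

Lemma gbinom_S x j : gbinom x (S j) = gbinom x j * (x - INR j) / INR (S j).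
Proof. reflexivity. Qed.

Lemma gbinom_0 x : gbinom x 0 = 1.
Proof. reflexivity. Qed.

Lemma gbinom_1 x : gbinom x 1 = x.
Proof. simpl. field. Qed.

Lemma gbinom_pascal x j : gbinom (x + 1) (S j) = gbinom x (S j) + gbinom x j.
Proof.
  induction j as [|j IH]; [simpl; field|].
  rewrite gbinom_S, IH, !gbinom_S, !S_INR.
  pose proof (pos_INR j). field. lra.
Qed.

Lemma gbinom_pred x j : x <> 0 -> gbinom (x - 1) j = gbinom x j * (x - INR j) / x.
Proof.
  intros Hx. induction j as [|j IH]; [simpl; field; exact Hx|].
  rewrite !gbinom_S, IH, S_INR.
  pose proof (pos_INR j). field. split; lra.
Qed.

Lemma gbinom_nat_eq0 i j : (i < j)%nat -> gbinom (INR i) j = 0.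
Proof.
  induction j as [|j IH]; intros Hij; [lia|].
  rewrite gbinom_S. destruct (Nat.eq_dec i j) as [->|Hne].
  - rewrite Rminus_diag. unfold Rdiv. ring.
  - rewrite IH by lia. unfold Rdiv. ring.
Qed.

Lemma gbinom_0_S j : gbinom 0 (S j) = 0.
Proof. exact (gbinom_nat_eq0 0 (S j) (Nat.lt_0_succ j)). Qed.

Lemma gbinom_nat_ge0 n k : (k <= n)%nat -> 0 <= gbinom (INR n) k.
Proof.
  induction k as [|k IH]; intros Hk; [simpl; lra|].
  rewrite gbinom_S. apply Rmult_le_pos; [apply Rmult_le_pos|].
  - apply IH; lia.
  - apply le_INR in Hk. rewrite S_INR in Hk. lra.
  - left. apply Rinv_0_lt_compat, lt_0_INR. lia.
Qed.

(* [kpoly x y k] is the coefficient of [z^k] in [(1-z)^x (1+z)^y], so that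
   [kraw n k x = kpoly x (n - x) k]. *)
Definition kpoly (x y : R) (k : nat) : R :=
  sumR 0 (fun j => (-1) ^ j * gbinom x j * gbinom y (k - j)) k.

Lemma kpoly_0 x y : kpoly x y 0 = 1.
Proof. unfold kpoly. simpl. ring. Qed.

Lemma kpoly_succ_r x y k : kpoly x (y + 1) (S k) = kpoly x y (S k) + kpoly x y k.
Proof.
  unfold kpoly. rewrite !sumR_S, Nat.sub_diag.
  rewrite (sumR_eq 0 _ (fun j => (-1) ^ j * gbinom x j * gbinom y (S k - j)
                                 + (-1) ^ j * gbinom x j * gbinom y (k - j))).
  - rewrite sumR_plus. simpl. ring.
  - intros j Hj. replace (S k - j)%nat with (S (k - j)) by lia.
    rewrite gbinom_pascal. ring.
Qed.

Lemma kpoly_succ_l x y k : kpoly (x + 1) y (S k) = kpoly x y (S k) - kpoly x y k.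
Proof.
  unfold kpoly. rewrite !sumR_shift.
  rewrite (sumR_eq 0 (fun j => (-1) ^ S j * gbinom (x + 1) (S j) * gbinom y (S k - S j))
     (fun j => (-1) ^ S j * gbinom x (S j) * gbinom y (k - j)
               - (-1) ^ j * gbinom x j * gbinom y (k - j))).
  - rewrite sumR_minus. simpl. ring.
  - intros j Hj. simpl (S k - S j)%nat. rewrite gbinom_pascal. simpl pow. ring.
Qed.

Lemma kpoly_nat_trunc i y k : (i <= k)%nat ->
  kpoly (INR i) y k = sumR 0 (fun j => (-1) ^ j * gbinom (INR i) j * gbinom y (k - j)) i.
Proof.
  intros Hik. apply sumR_trunc; [exact Hik|].
  intros j Hj. rewrite gbinom_nat_eq0 by lia. ring.
Qed.

Definition kgen (N : nat) (x y z : R) : R := sumR 0 (fun k => kpoly x y k * z ^ k) N.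

Lemma kgen_succ_r N x y z : kgen (S N) x (y + 1) z = kgen (S N) x y z + z * kgen N x y z.
Proof.
  unfold kgen. rewrite !sumR_shift, !kpoly_0.
  rewrite (sumR_eq 0 _ (fun k => kpoly x y (S k) * z ^ S k + z * (kpoly x y k * z ^ k)))
    by (intros; rewrite kpoly_succ_r; simpl; ring).
  rewrite sumR_plus, sumR_scal. simpl. ring.
Qed.

Lemma kgen_succ_l N x y z : kgen (S N) (x + 1) y z = kgen (S N) x y z - z * kgen N x y z.
Proof.
  unfold kgen. rewrite !sumR_shift, !kpoly_0.
  rewrite (sumR_eq 0 _ (fun k => kpoly x y (S k) * z ^ S k - z * (kpoly x y k * z ^ k)))
    by (intros; rewrite kpoly_succ_l; simpl; ring).
  rewrite sumR_minus, sumR_scal. simpl. ring.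
Qed.

Lemma kgen_00 N z : kgen N 0 0 z = 1.
Proof.
  unfold kgen. rewrite (sumR_trunc 0 _ 0); [simpl; rewrite kpoly_0; ring | lia |].
  intros k Hk. destruct k as [|k]; [lia|].
  change (kpoly (INR 0) 0 (S k) * z ^ S k = 0).
  rewrite kpoly_nat_trunc by lia. cbn [sumR Nat.leb]. rewrite Nat.sub_0_r, gbinom_0_S. ring.
Qed.

Lemma kgen_nat z i m N : (i + m <= N)%nat ->
  kgen N (INR i) (INR m) z = (1 - z) ^ i * (1 + z) ^ m.
Proof.
  revert i N. induction m as [|m IHm]; intros i.
  - induction i as [|i IHi]; intros N HN.
    + simpl. rewrite kgen_00. ring.
    + destruct N as [|N]; [lia|].
      rewrite S_INR, kgen_succ_l, !IHi by lia. simpl. ring.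
  - intros N HN. destruct N as [|N]; [lia|].
    rewrite S_INR, kgen_succ_r, !IHm by lia. simpl. ring.
Qed.

Lemma kraw_gen n i z : (i <= n)%nat ->
  sumR 0 (fun k => kraw n k (INR i) * z ^ k) n = (1 - z) ^ i * (1 + z) ^ (n - i).
Proof.
  intros Hi. rewrite <- (kgen_nat z i (n - i) n) by lia.
  unfold kgen, kraw. rewrite minus_INR by lia. reflexivity.
Qed.

Lemma kraw_k0 n x : kraw n 0 x = 1.
Proof. apply kpoly_0. Qed.

Lemma kraw_0 n k : kraw n k 0 = gbinom (INR n) k.
Proof.
  change (kpoly (INR 0) (INR n - INR 0) k = gbinom (INR n) k).
  rewrite kpoly_nat_trunc by lia. cbn [sumR Nat.leb pow]. change (INR 0) with 0.
  rewrite Nat.sub_0_r, Rminus_0_r, gbinom_0. ring.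
Qed.

Lemma kraw_1 n k : (1 <= k <= n)%nat ->
  INR n * kraw n k 1 = gbinom (INR n) k * (INR n - 2 * INR k).
Proof.
  intros Hk. destruct k as [|j]; [lia|].
  assert (Hn : 1 <= INR n) by (apply (le_INR 1); lia).
  change (INR n * kpoly (INR 1) (INR n - INR 1) (S j) = gbinom (INR n) (S j) * (INR n - 2 * INR (S j))).
  rewrite kpoly_nat_trunc by lia. cbn [sumR Nat.leb pow]. change (INR 1) with 1.
  replace (S j - 1)%nat with j by lia.
  rewrite Nat.sub_0_r, gbinom_0, gbinom_1, !gbinom_pred, gbinom_S, S_INR by lra.
  pose proof (pos_INR j). field. lra.
Qed.

Lemma kraw_2 n k : (1 <= k <= n)%nat ->
  INR n * (INR n - 1) * kraw n k 2 = gbinom (INR n) k * ((INR n - 2 * INR k) ^ 2 - INR n).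
Proof.
  intros Hk. destruct k as [|[|j]]; [lia| |].
  - unfold kraw. cbn [sumR Nat.leb pow Nat.sub]. change (INR 1) with 1.
    rewrite !gbinom_0, !gbinom_1. ring.
  - assert (Hn : 2 <= INR n) by (apply (le_INR 2); lia).
    change (kraw n (S (S j)) 2) with (kpoly (INR 2) (INR n - INR 2) (S (S j))).
    rewrite kpoly_nat_trunc by lia. cbn [sumR Nat.leb pow]. change (INR 2) with 2.
    replace (S (S j) - 1)%nat with (S j) by lia. replace (S (S j) - 2)%nat with j by lia.
    replace (INR n - 2) with (INR n - 1 - 1) by ring.
    replace (gbinom 2 2) with 1 by (simpl; field).
    rewrite Nat.sub_0_r, gbinom_0, gbinom_1, !gbinom_pred, !gbinom_S, !S_INR by lra.
    pose proof (pos_INR j). field. lra.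
Qed.

(* Multiplying the slack by [n (n-1) / binom(n,k)] turns it into a quadratic in [n - 2k]. *)
Lemma dual_slack_nonneg n k c p : (1 <= k <= n)%nat -> (2 <= n)%nat ->
  0 <= INR n * (INR n - 1) + c * (INR n - 1) * (INR n - 2 * INR k)
       + p * ((INR n - 2 * INR k) ^ 2 - INR n) ->
  0 <= kraw n k 0 + c * kraw n k 1 + p * kraw n k 2.
Proof.
  intros Hk Hn Hpoly.
  assert (Hx : 2 <= INR n) by (apply (le_INR 2); lia).
  pose proof (gbinom_nat_ge0 n k ltac:(lia)) as HG.
  assert (E : INR n * (INR n - 1) * (kraw n k 0 + c * kraw n k 1 + p * kraw n k 2) =
    gbinom (INR n) k * (INR n * (INR n - 1) + c * (INR n - 1) * (INR n - 2 * INR k)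
                        + p * ((INR n - 2 * INR k) ^ 2 - INR n))).
  { transitivity (INR n * (INR n - 1) * kraw n k 0 + c * (INR n - 1) * (INR n * kraw n k 1)
                  + p * (INR n * (INR n - 1) * kraw n k 2)); [ring|].
    rewrite kraw_0, kraw_1, kraw_2 by lia. ring. }
  assert (0 <= INR n * (INR n - 1) * (kraw n k 0 + c * kraw n k 1 + p * kraw n k 2))
    by (rewrite E; apply Rmult_le_pos; assumption).
  assert (0 < INR n * (INR n - 1)) by nra.
  nra.
Qed.

(* Weak duality, with the single dual multiplier [p] on the constraint [i = 2]. *)
Lemma lp_obj_le n a p xv : (2 <= n)%nat -> 0 <= p ->
  (forall k, (1 <= k <= n)%nat ->
     0 <= INR n * (INR n - 1) + (1 / a - 1 - p) * (INR n - 1) * (INR n - 2 * INR k)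
          + p * ((INR n - 2 * INR k) ^ 2 - INR n)) ->
  lp_feasible n xv -> lp_obj n a xv <= p.
Proof.
  intros Hn Hp Hpoly [Hx Hc].
  specialize (Hc 2%nat ltac:(lia)). change (INR 2) with 2 in Hc.
  unfold lp_obj.
  rewrite (sumR_eq 1 _ (fun k => (kraw n k 0 + (1 / a - 1 - p) * kraw n k 1 + p * kraw n k 2) * xv k
                                + p * ((kraw n k 1 - kraw n k 2) * xv k)))
    by (intros; ring).
  rewrite sumR_plus, sumR_scal.
  assert (0 <= sumR 1 (fun k => (kraw n k 0 + (1 / a - 1 - p) * kraw n k 1
                                 + p * kraw n k 2) * xv k) n).
  { apply sumR_nonneg. intros k Hk.
    apply Rmult_le_pos; [apply dual_slack_nonneg; auto; lia | apply Hx; lia]. }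
  nra.
Qed.

Lemma lp_values_le n a p : (2 <= n)%nat -> 0 <= p ->
  (forall k, (1 <= k <= n)%nat ->
     0 <= INR n * (INR n - 1) + (1 / a - 1 - p) * (INR n - 1) * (INR n - 2 * INR k)
          + p * ((INR n - 2 * INR k) ^ 2 - INR n)) ->
  forall v, lp_values n a v -> v <= p.
Proof.
  intros Hn Hp Hpoly v [xv [Hxv ->]]. apply lp_obj_le; assumption.
Qed.

Lemma quadratic_nonneg p b c d : 0 < p -> b ^ 2 <= 4 * p * c -> 0 <= p * d ^ 2 + b * d + c.
Proof.
  intros Hp Hdisc.
  assert (E : 4 * p * (p * d ^ 2 + b * d + c) = (2 * p * d + b) ^ 2 + (4 * p * c - b ^ 2)) by ring.
  assert (0 <= (2 * p * d + b) ^ 2) by apply pow2_ge_0.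
  nra.
Qed.

(* The quadratic in [d = n - 2k] has leading coefficient [p], linear coefficient [c (n-1)]
   and constant term [(n-1-p) n]; its discriminant is negative for large [n] iff [c^2 < 4p]. *)
Lemma dual_poly_nonneg_eventually c p : 0 < p -> c ^ 2 < 4 * p ->
  exists N, forall n k : nat, (N <= n)%nat ->
    0 <= INR n * (INR n - 1) + c * (INR n - 1) * (INR n - 2 * INR k)
         + p * ((INR n - 2 * INR k) ^ 2 - INR n).
Proof.
  intros Hp Hc. set (dl := 4 * p - c ^ 2).
  destruct (INR_archimed dl (8 * p ^ 2) ltac:(unfold dl; lra)) as [N HN].
  exists (N + 2)%nat. intros n k Hn.
  assert (HNn : INR N + 2 <= INR n) by (change 2 with (INR 2); rewrite <- plus_INR; apply le_INR; lia).
  pose proof (pos_INR N).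
  set (y := INR n - 1). set (d := INR n - 2 * INR k).
  assert (Hy : 8 * p ^ 2 <= dl * y) by (unfold y; unfold dl in HN |- *; nra).
  replace (INR n * y + c * y * d + p * (d ^ 2 - INR n))
    with (p * d ^ 2 + (c * y) * d + (y + 1) * (y - p)) by (unfold y; ring).
  apply quadratic_nonneg; [exact Hp|].
  assert (1 <= y) by (unfold y; lra).
  assert (c ^ 2 = 4 * p - dl) by (unfold dl; ring).
  nra.
Qed.

(* With [z = (1+s)/(1-s)] one has [1 - z = -s (1+z)], so the generating function gives
   [sum_k K_k(i) z^k = (-s)^i (1+z)^n]. *)
Definition geom_point (n : nat) (s : R) (k : nat) : R :=
  let z := (1 + s) / (1 - s) in z ^ k / ((s + s ^ 2) * (1 + z) ^ n).

Lemma geom_point_sum n s i : 0 < s < 1 -> (i <= n)%nat ->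
  sumR 1 (fun k => kraw n k (INR i) * geom_point n s k) n
  = (-s) ^ i / (s + s ^ 2) - geom_point n s 0.
Proof.
  intros Hs Hi. unfold geom_point.
  set (z := (1 + s) / (1 - s)). set (D := (s + s ^ 2) * (1 + z) ^ n).
  assert (Hz : 1 - z = - s * (1 + z)) by (unfold z; field; lra).
  assert (Hz0 : 0 < z) by (apply Rdiv_lt_0_compat; lra).
  assert (Hzn : 0 < (1 + z) ^ n) by (apply pow_lt; lra).
  pose proof (sumR_split_first (fun k => kraw n k (INR i) * (z ^ k / D)) n) as Hsplit.
  cbv beta in Hsplit. rewrite kraw_k0 in Hsplit.
  rewrite (sumR_eq 0 _ (fun k => / D * (kraw n k (INR i) * z ^ k))) in Hsplit
    by (intros; unfold Rdiv; ring).
  rewrite sumR_scal, kraw_gen, Hz, Rpow_mult_distr, Rmult_assoc, <- pow_add in Hsplit by lia.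
  replace (i + (n - i))%nat with n in Hsplit by lia.
  assert (E : / D * ((- s) ^ i * (1 + z) ^ n) = (-s) ^ i / (s + s ^ 2)).
  { unfold D. field. split; [nra | lra]. }
  rewrite pow_O in *. lra.
Qed.

Lemma pow_opp_le_sqr s i : 0 <= s < 1 -> (2 <= i)%nat -> (- s) ^ i <= s ^ 2.
Proof.
  intros Hs Hi. replace i with (2 + (i - 2))%nat by lia.
  rewrite pow_add. set (m := (i - 2)%nat).
  assert (Hm : (- s) ^ m <= 1).
  { apply (Rle_trans _ (Rabs ((- s) ^ m))); [apply Rle_abs|].
    rewrite <- RPow_abs, Rabs_Ropp, Rabs_right by lra.
    destruct m as [|m]; [simpl; lra|].
    apply Rlt_le, pow_lt_1_compat; [lra | lia]. }
  replace ((- s) ^ 2) with (s ^ 2) by ring.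
  assert (0 <= s ^ 2) by nra. nra.
Qed.

Lemma geom_point_ge0 n s k : 0 < s < 1 -> 0 <= geom_point n s k.
Proof.
  intros Hs. unfold geom_point.
  assert (Hz : 0 < (1 + s) / (1 - s)) by (apply Rdiv_lt_0_compat; lra).
  apply Rle_mult_inv_pos; [apply pow_le; lra|].
  apply Rmult_lt_0_compat; [nra | apply pow_lt; lra].
Qed.

Lemma geom_point_feasible n s : 0 < s < 1 -> lp_feasible n (geom_point n s).
Proof.
  intros Hs. split; [intros; apply geom_point_ge0; exact Hs|].
  intros i Hi.
  rewrite (sumR_eq 1 _ (fun k => kraw n k (INR 1) * geom_point n s k
                                - kraw n k (INR i) * geom_point n s k)) by (intros; change (INR 1) with 1; ring).
  rewrite sumR_minus, !geom_point_sum by (lra || lia).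
  pose proof (pow_opp_le_sqr s i ltac:(lra) ltac:(lia)).
  apply Rle_ge. apply (Rmult_le_reg_r (s + s ^ 2)); [nra|].
  field_simplify; [simpl; nra | nra].
Qed.

Lemma lp_obj_geom_point n a s : 0 < a -> 0 < s < 1 -> (1 <= n)%nat ->
  ((1 / a - 1) * s - 1) / (s + s ^ 2) <= lp_obj n a (geom_point n s).
Proof.
  intros Ha Hs Hn. unfold lp_obj.
  rewrite (sumR_eq 1 _ (fun k => kraw n k (INR 0) * geom_point n s k
                                + (1 / a - 1) * (kraw n k (INR 1) * geom_point n s k)))
    by (intros; cbv beta; change (INR 0) with 0; change (INR 1) with 1; ring).
  rewrite sumR_plus, sumR_scal, !geom_point_sum by (lra || lia).
  pose proof (geom_point_ge0 n s 0 Hs) as Ht. set (t := geom_point n s 0) in *.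
  match goal with |- _ <= ?v =>
    replace v with (((1 / a - 1) * s - 1) / (s + s ^ 2) + 1 / a * t) by (simpl; field; nra)
  end.
  assert (0 <= 1 / a * t) by (apply Rmult_le_pos; [apply Rlt_le, Rdiv_lt_0_compat |]; lra).
  lra.
Qed.

Lemma lp_values_ge n a s : (1 <= n)%nat -> 0 < a -> 0 < s < 1 ->
  exists v, lp_values n a v /\ ((1 / a - 1) * s - 1) / (s + s ^ 2) <= v.
Proof.
  intros Hn Ha Hs. exists (lp_obj n a (geom_point n s)). split.
  - exists (geom_point n s). split; [apply geom_point_feasible; exact Hs | reflexivity].
  - apply lp_obj_geom_point; assumption.
Qed.

Lemma is_lub_seq_cv (E : nat -> R -> Prop) l :
  (forall eps, 0 < eps -> exists N, forall n, (N <= n)%nat -> exists v, E n v /\ l - eps < v) ->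
  (forall eps, 0 < eps -> exists N, forall n, (N <= n)%nat -> forall v, E n v -> v <= l + eps) ->
  exists (N : nat) (L : nat -> R), (forall n, (N <= n)%nat -> is_lub (E n) (L n)) /\ Un_cv L l.
Proof.
  intros Hlo Hup.
  destruct (Hlo 1 Rlt_0_1) as [N0 H0]. destruct (Hup 1 Rlt_0_1) as [N1 H1].
  set (N := Nat.max N0 N1).
  assert (Hb : forall n, (N <= n)%nat -> bound (E n)).
  { intros n Hn. exists (l + 1). intros v Hv. apply (H1 n); [lia | exact Hv]. }
  assert (Hne : forall n, (N <= n)%nat -> exists v, E n v).
  { intros n Hn. destruct (H0 n ltac:(lia)) as [v [Hv _]]. now exists v. }
  set (L n := match le_lt_dec N n with
              | left H => proj1_sig (completeness _ (Hb n H) (Hne n H))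
              | right _ => 0
              end).
  assert (HL : forall n, (N <= n)%nat -> is_lub (E n) (L n)).
  { intros n Hn. unfold L. destruct (le_lt_dec N n) as [H|H]; [apply proj2_sig | lia]. }
  exists N, L. split; [exact HL|].
  intros eps Heps.
  destruct (Hlo (eps / 2) ltac:(lra)) as [N2 H2]. destruct (Hup (eps / 2) ltac:(lra)) as [N3 H3].
  exists (Nat.max N (Nat.max N2 N3)). intros n Hn.
  destruct (HL n ltac:(lia)) as [Hub Hleast].
  destruct (H2 n ltac:(lia)) as [v [Hv Hlv]].
  assert (v <= L n) by (apply Hub; exact Hv).
  assert (L n <= l + eps / 2) by (apply Hleast; intros w Hw; apply (H3 n); [lia | exact Hw]).
  unfold R_dist. apply Rabs_def1; lra.
Qed.

Lemma theta_lt_quarter a : 0 < a < 1 / 4 ->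
  exists T, 1 < T /\ theta a = T ^ 2 /\ 1 / a - 1 = T ^ 2 + 2 * T.
Proof.
  intros Ha. set (q := sqrt a).
  assert (Hq0 : 0 < q) by (apply sqrt_lt_R0; lra).
  assert (Hqq : q * q = a) by (apply sqrt_sqrt; lra).
  assert (Hq1 : q < 1 / 2) by nra.
  exists ((1 - q) / q). repeat split.
  - apply (Rmult_lt_reg_r q); [lra|]. field_simplify; lra.
  - unfold theta. destruct (Rlt_dec a (1 / 4)); [|lra].
    fold q. rewrite <- Hqq. field. lra.
  - rewrite <- Hqq. field. lra.
Qed.

Lemma theta_ge_quarter a : 1 / 4 <= a <= 1 / 2 ->
  exists b, 1 <= b <= 2 /\ theta a = b - 1 /\ 1 / a - 1 = 2 * b - 1.
Proof.
  intros Ha. exists (1 / (2 * a)). repeat split.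
  - apply (Rmult_le_reg_r (2 * a)); [lra|]. field_simplify; lra.
  - apply (Rmult_le_reg_r (2 * a)); [lra|]. field_simplify; lra.
  - unfold theta. destruct (Rlt_dec a (1 / 4)); [lra | reflexivity].
  - field. lra.
Qed.

Lemma lp_values_lower_small a n : 0 < a < 1 / 4 -> (1 <= n)%nat ->
  exists v, lp_values n a v /\ theta a <= v.
Proof.
  intros Ha Hn. destruct (theta_lt_quarter a Ha) as [T [HT [Hth Hm]]].
  assert (Hs : 0 < 1 / T < 1).
  { split; [apply Rdiv_lt_0_compat | apply (Rmult_lt_reg_r T); field_simplify]; lra. }
  destruct (lp_values_ge n a (1 / T) Hn ltac:(lra) Hs) as [v [Hv Hle]].
  exists v. split; [exact Hv|].
  rewrite Hm in Hle.
  replace (((T ^ 2 + 2 * T) * (1 / T) - 1) / (1 / T + (1 / T) ^ 2)) with (T ^ 2) in Hle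
    by (field; lra).
  lra.
Qed.

Lemma lp_values_upper_small a eps : 0 < a < 1 / 4 -> 0 < eps ->
  exists N, forall n, (N <= n)%nat -> forall v, lp_values n a v -> v <= theta a + eps.
Proof.
  intros Ha Heps. destruct (theta_lt_quarter a Ha) as [T [HT [Hth Hm]]].
  set (e := Rmin eps 1).
  assert (He : 0 < e <= 1) by (split; [apply Rmin_glb_lt | apply Rmin_r]; lra).
  assert (e <= eps) by apply Rmin_l.
  set (p := T ^ 2 + e).
  destruct (dual_poly_nonneg_eventually (1 / a - 1 - p) p) as [N HN].
  { unfold p. nra. }
  { rewrite Hm. unfold p. nra. }
  exists (Nat.max N 2). intros n Hn v Hv.
  assert (v <= p).
  { apply (lp_values_le n a p); [lia | unfold p; nra | | exact Hv].
    intros k _. apply HN. lia. }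
  unfold p in *. lra.
Qed.

Lemma lp_values_lower_large a eps n : 1 / 4 <= a <= 1 / 2 -> 0 < eps -> (1 <= n)%nat ->
  exists v, lp_values n a v /\ theta a - eps < v.
Proof.
  intros Ha Heps Hn. destruct (theta_ge_quarter a Ha) as [b [Hb [Hth Hm]]].
  set (h := Rmin (1 / 2) (eps / 4)).
  assert (Hh : 0 < h <= 1 / 2 /\ h <= eps / 4)
    by (repeat split; [apply Rmin_glb_lt | apply Rmin_l | apply Rmin_r]; lra).
  destruct (lp_values_ge n a (1 - h) Hn ltac:(lra) ltac:(lra)) as [v [Hv Hle]].
  exists v. split; [exact Hv|].
  rewrite Hm in Hle. set (s := 1 - h) in Hle.
  assert (Hbound : b - 1 - 2 * h <= ((2 * b - 1) * s - 1) / (s + s ^ 2)).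
  { apply (Rmult_le_reg_r (s + s ^ 2)); [unfold s; nra|].
    unfold Rdiv. rewrite Rmult_assoc, Rinv_l, Rmult_1_r by (unfold s; nra).
    assert (((2 * b - 1) * s - 1) - (b - 1 - 2 * h) * (s + s ^ 2)
            = h * ((b - 1) * s - 1 + 2 * s * (1 + s))) by (unfold s; ring).
    assert (0 <= h * ((b - 1) * s - 1 + 2 * s * (1 + s))) by (apply Rmult_le_pos; unfold s; nra).
    lra. }
  lra.
Qed.

Lemma lp_values_upper_large a n : 1 / 4 <= a <= 1 / 2 -> (2 <= n)%nat ->
  forall v, lp_values n a v -> v <= theta a.
Proof.
  intros Ha Hn. destruct (theta_ge_quarter a Ha) as [b [Hb [Hth Hm]]].
  rewrite Hth. apply lp_values_le; [exact Hn | lra|].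
  intros k Hk. rewrite Hm.
  assert (Hk1 : 1 <= INR k) by (apply (le_INR 1); lia).
  assert (Hkn : INR k <= INR n) by (apply le_INR; lia).
  (* The slack vanishes at [k = n]; for [k < n] the second factor is at least [(2 - b)(n - 1)]. *)
  replace (INR n * (INR n - 1) + (2 * b - 1 - (b - 1)) * (INR n - 1) * (INR n - 2 * INR k)
           + (b - 1) * ((INR n - 2 * INR k) ^ 2 - INR n))
    with (2 * (INR n - INR k) * ((b - 1) * (INR n - 2 * INR k) + INR n - b)) by ring.
  destruct (Nat.eq_dec k n) as [->|Hne]; [replace (INR n - INR n) with 0 by ring; lra|].
  assert (Hkn1 : INR (S k) <= INR n) by (apply le_INR; lia).
  rewrite S_INR in Hkn1.
  apply Rmult_le_pos; nra.
Qed.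

Theorem theorem2 (a : R) (ha0 : 0 < a) (ha1 : a <= 1/2) :
  exists (N : nat) (L : nat -> R),
    (forall n, (N <= n)%nat -> LambdaBar_is n a (L n)) /\
    Un_cv L (theta a).
Proof.
  apply (is_lub_seq_cv (fun n => lp_values n a)); intros eps Heps;
    destruct (Rlt_dec a (1 / 4)) as [Hsmall | Hlarge].
  - exists 1%nat. intros n Hn.
    destruct (lp_values_lower_small a n ltac:(lra) Hn) as [v [Hv Hle]].
    exists v. split; [exact Hv | lra].
  - exists 1%nat. intros n Hn. apply lp_values_lower_large; lra || lia.
  - apply lp_values_upper_small; lra.
  - exists 2%nat. intros n Hn v Hv.
    pose proof (lp_values_upper_large a n ltac:(lra) Hn v Hv). lra.
Qed.
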